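(* Let $n\ge1$ and $P=\{(i,j)\colon1\le i\le j\le n\}$ be the shifted staircase. Then $\sum_{p\in P}T_p^-\equiv^q \frac{\binom{n+1}{2}_q}{[2n]_q}$.
   Context: $P$ is ordered by $(i,j)\le(i',j')$ iff $i\le i'$ and $j\le j'$. $\mathcal{J}(P)$ is the set of order ideals. For $p\in P$, $I\in\mathcal{J}(P)$: $T_p^+(I)=1$ if $p$ is minimal in $P\setminus I$, else $0$; $T_p^-(I)=1$ if $p$ is maximal in $I$, else $0$; $T_p^q=T_p^+-qT_p^-$ with $q$ an indeterminate. For $f,g\colon\mathcal{J}(P)\to\mathbb{R}(q)$, $f\equiv^q g$ means $f-g=\sum_{p\in P}c_p(q)T_p^q$ for some $c_p(q)\in\mathbb{R}(q)$; an element of $\mathbb{R}(q)$ denotes a constant function. $[m]_q=1+q+\dots+q^{m-1}$, $[m]_q!=[m]_q[m-1]_q\cdots[1]_q$, and $\binom{m}{k}_q=\frac{[m]_q!}{[k]_q![m-k]_q!}$. *)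

From HB Require Import structures.
From mathcomp Require Import all_boot all_order all_algebra.
From mathcomp Require Import fraction.
From mathcomp Require Import reals.
Set Implicit Arguments. Unset Strict Implicit. Unset Printing Implicit Defensive.
Import Order.TTheory GRing.Theory Num.Theory.
Local Open Scope ring_scope.

Definition Rq (R : realType) := {fraction {poly R}}.
Definition qvar (R : realType) : Rq R := tofrac ('X : {poly R}).

Definition qint (R : realType) (m : nat) : Rq R := \sum_(i < m) qvar R ^+ i.
Definition qfact (R : realType) (m : nat) : Rq R := \prod_(i < m) qint R i.+1.
Definition qbinom (R : realType) (m k : nat) : Rq R :=
  qfact R m / (qfact R k * qfact R (m - k)).

Section Toggles.
Variables (T : finType) (le : rel T) (R : realType).
Definition plt (x y : T) := (x != y) && le x y.
Definition is_ideal (I : {set T}) :=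
  [forall x, forall y, (le x y && (y \in I)) ==> (x \in I)].
Definition ideals := {I : {set T} | is_ideal I}.
Definition Tplus (p : T) (I : ideals) : Rq R :=
  if (p \notin val I) && [forall y, plt y p ==> (y \in val I)] then 1 else 0.
Definition Tminus (p : T) (I : ideals) : Rq R :=
  if (p \in val I) && [forall y, plt p y ==> (y \notin val I)] then 1 else 0.
Definition Tq (p : T) (I : ideals) : Rq R := Tplus p I - qvar R * Tminus p I.
Definition qequiv (f g : ideals -> Rq R) : Prop :=
  exists c : T -> Rq R, forall I, f I - g I = \sum_(p : T) c p * Tq p I.
End Toggles.

(* Shifted staircase P = {(i,j) : 1 <= i <= j <= n}, encoded 0-indexed as
   pairs (i,j) of 'I_n with i <= j, ordered componentwise. *)
Definition SSt (n : nat) := {p : 'I_n * 'I_n | (p.1 <= p.2)%N}.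
Definition SSt_le (n : nat) : rel (SSt n) := fun p p' =>
  ((val p).1 <= (val p').1)%N && ((val p).2 <= (val p').2)%N.

(* With f_p = 1 + q c_p, the difference sum_p T_p^- - sum_p c_p T_p^q equals
   G(I) = sum_p (f_p T_p^-(I) - c_p T_p^+(I)), so it suffices to find c with G
   constant on ideals.  Deleting a maximal element x = (a,b) from I changes G by
   f_x + c_x, minus f_p for the lower covers p of x that become maximal, minus
   c_p for the upper covers p of x that were minimal outside I.  The covers
   pair up as (a-1,b) with (a,b+1) and (a,b-1) with (a+1,b): exactly one member
   of each pair contributes, according to whether the diagonal cell (a-1,b+1),
   resp. (a+1,b-1), lies in I.  The coefficients are chosen so that both members
   of a pair contribute the same amount and the two amounts add up to f_x + c_x;
   then G(I) = G(empty) = -c_(0,0), which is the q-binomial quotient. *)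

From HB Require Import structures.
From mathcomp Require Import all_boot all_order all_algebra.
From mathcomp Require Import fraction reals.
From mathcomp Require Import ring zify.
Import GRing.Theory.
Local Open Scope ring_scope.
Set Implicit Arguments. Unset Strict Implicit.

Section Coefficients.
Variables (F : fieldType) (q : F) (n : nat).
Hypotheses (q_neq1 : 1 - q != 0) (q_neqN1 : 1 + q != 0) (qn_neqN1 : 1 + q ^+ n != 0).

(* Cells are indexed from 0, p = (a,b) with a <= b < n.  [ccoef a b] is c_p and
   [fcoef a b] is f_p = 1 + q c_p.  Off the diagonal both are values of the
   symmetric [ucoef], which vanishes at (0,n): that absorbs the right boundary
   of the staircase. *)
Definition ucoef (a b : nat) : F :=
  (1 + q ^+ n - q ^+ a - q ^+ b) / ((1 - q) * (1 + q ^+ n)).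
Definition ccoef (a b : nat) : F :=
  if (a < b)%N then ucoef a b
  else q / ((1 - q) * (1 + q)) - q ^+ a / ((1 - q) * (1 + q ^+ n)).
Definition fcoef (a b : nat) : F := 1 + q * ccoef a b.

Lemma fcoef_lt a b : (a < b)%N -> fcoef a b = ucoef a.+1 b.+1.
Proof.
move=> ltab; rewrite /fcoef /ccoef ltab /ucoef !exprS.
by field; rewrite q_neq1 qn_neqN1.
Qed.

Lemma ucoef0n : ucoef 0 n = 0.
Proof. by rewrite /ucoef expr0 (_ : 1 + q ^+ n - 1 - q ^+ n = 0) ?mul0r //; ring. Qed.

Lemma coef_pair_up_right a b (d : bool) :
  (a <= b)%N -> (b < n)%N -> (d -> b.+1 < n)%N ->
  (if (0 < a)%N && ~~ d then fcoef a.-1 b else 0)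
  + (if (b.+1 < n)%N && ((a == 0)%N || d) then ccoef a b.+1 else 0)
  = ucoef a b.+1.
Proof.
move=> leab ltbn hd; rewrite /ccoef ltnS leab.
case: a leab => [|a] leab /=.
  case: ltnP => [_|lenb]; first by rewrite add0r.
  by rewrite addr0 (_ : b.+1 = n) ?ucoef0n //; lia.
case: d hd => [/(_ isT) -> | _] /=; first by rewrite add0r.
by rewrite andbF addr0 fcoef_lt //; lia.
Qed.

Lemma coef_pair_left_down a b (d : bool) :
  (d -> a.+2 <= b)%N ->
  (if (a < b)%N && ~~ d then fcoef a b.-1 else 0)
  + (if (a < b)%N && ((a.+1 == b)%N || d) then ccoef a.+1 b else 0)
  = if (a < b)%N then ucoef a.+1 b else 0.
Proof.
move=> hd; case: ltnP => [ltab|_] /=; last by rewrite addr0.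
case: d hd => [/(_ isT) lt2ab | _] /=.
  by rewrite orbT add0r /ccoef lt2ab.
case: (eqVneq a.+1 b) => [<- | neab] /=.
  rewrite /fcoef /ccoef !ltnn /ucoef !exprS.
  by field; rewrite q_neq1 q_neqN1 qn_neqN1.
rewrite addr0 (_ : b = b.-1.+1) ?fcoef_lt //=; lia.
Qed.

Lemma coef_balance a b :
  (a <= b)%N ->
  fcoef a b + ccoef a b = ucoef a b.+1 + (if (a < b)%N then ucoef a.+1 b else 0).
Proof.
rewrite leq_eqVlt => /predU1P[<- | ltab].
  rewrite ltnn addr0 /fcoef /ccoef !ltnn /ucoef !exprS.
  by field; rewrite q_neq1 q_neqN1 qn_neqN1.
rewrite ltab fcoef_lt // /ccoef ltab /ucoef !exprS.
by field; rewrite q_neq1 qn_neqN1.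
Qed.

Lemma neg_ccoef00 : 1 - q ^+ n != 0 ->
  - ccoef 0 0 = (1 - q ^+ n.+1) / (1 - q) * ((1 - q ^+ n) / (1 - q))
                / ((1 - q ^+ 2) / (1 - q)) / ((1 - q ^+ (2 * n)) / (1 - q)).
Proof.
move=> qn_neq1; rewrite /ccoef ltnn expr0 exprS mul2n -addnn exprD.
rewrite (_ : 1 - q ^+ 2 = (1 - q) * (1 + q)); last by rewrite expr2; ring.
rewrite (_ : 1 - q ^+ n * q ^+ n = (1 - q ^+ n) * (1 + q ^+ n)); last by ring.
by field; rewrite q_neq1 q_neqN1 qn_neqN1 qn_neq1.
Qed.

End Coefficients.

Section QArithmetic.
Variable R : realType.
Local Notation q := (qvar R).

Lemma qvar_expn_neq1 k : (0 < k)%N -> q ^+ k != 1.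
Proof.
move=> k_gt0; rewrite /qvar -tofracXn -tofrac1 tofrac_eq.
apply/eqP => /(congr1 (fun p : {poly R} => size p)).
by rewrite size_polyXn size_poly1; case: k k_gt0.
Qed.

Lemma onemX_qvar_neq0 k : (0 < k)%N -> 1 - q ^+ k != 0.
Proof. by move=> k_gt0; rewrite subr_eq0 eq_sym qvar_expn_neq1. Qed.

Lemma onem_qvar_neq0 : 1 - q != 0.
Proof. by rewrite -[q]expr1 onemX_qvar_neq0. Qed.

Lemma addX_qvar_neq0 k : (0 < k)%N -> 1 + q ^+ k != 0.
Proof.
move=> k_gt0; rewrite /qvar -tofracXn -tofrac1 -tofracD tofrac_eq0.
apply/eqP => /(congr1 (fun p : {poly R} => p`_0)).
rewrite coefD coef1 coefXn coef0 /=; case: k k_gt0 => // k _.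
by rewrite addr0; apply/eqP; rewrite oner_neq0.
Qed.

Lemma qintE m : qint R m = (1 - q ^+ m) / (1 - q).
Proof.
apply: (canRL (mulfK onem_qvar_neq0)); elim: m => [|m IHm].
  by rewrite /qint big_ord0 expr0 subrr mul0r.
by rewrite /qint big_ord_recr /= -/(qint R m) mulrDl IHm exprS; ring.
Qed.

Lemma qint_neq0 m : (0 < m)%N -> qint R m != 0.
Proof.
by move=> m_gt0; rewrite qintE mulf_neq0 ?invr_eq0 ?onemX_qvar_neq0 ?onem_qvar_neq0.
Qed.

Lemma qfact_neq0 m : qfact R m != 0.
Proof. by rewrite /qfact; apply/prodf_neq0 => i _; apply: qint_neq0. Qed.

Lemma qbinom2 m : qbinom R m.+2 2 = qint R m.+2 * qint R m.+1 / qint R 2.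
Proof.
rewrite /qbinom !subSS subn0.
have -> : qfact R m.+2 = qfact R m * qint R m.+1 * qint R m.+2 by rewrite /qfact !big_ord_recr.
have -> : qfact R 2 = qint R 2.
  by rewrite /qfact !big_ord_recr big_ord0 /= mul1r /qint big_ord1 expr0 mul1r.
rewrite -(mulrA (qfact R m)) [qfact R m * _]mulrC [_ * qfact R m]mulrC.
by rewrite invfM mulrA mulfK ?qfact_neq0 // [qint R m.+1 * _]mulrC.
Qed.

Lemma qbinom2_div_qint m : (0 < m)%N ->
  qbinom R m.+1 2 / qint R (2 * m) = - ccoef q m 0 0.
Proof.
case: m => // m _.
rewrite qbinom2 !qintE neg_ccoef00 //.
- exact: onem_qvar_neq0.
- by rewrite -[q]expr1 addX_qvar_neq0.
- exact: addX_qvar_neq0.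
- exact: onemX_qvar_neq0.
Qed.

End QArithmetic.

Section ToggleSum.
Variables (T : finType) (le : rel T).

Definition is_max_in (A : {set T}) (p : T) :=
  (p \in A) && [forall y, plt le p y ==> (y \notin A)].
Definition is_min_out (A : {set T}) (p : T) :=
  (p \notin A) && [forall y, plt le y p ==> (y \in A)].

Lemma TminusE (R : realType) (I : ideals le) p : Tminus R p I = (is_max_in (val I) p)%:R.
Proof. by rewrite /Tminus /is_max_in; case: ifP. Qed.

Lemma TplusE (R : realType) (I : ideals le) p : Tplus R p I = (is_min_out (val I) p)%:R.
Proof. by rewrite /Tplus /is_min_out; case: ifP. Qed.

Lemma pltxx x : plt le x x = false.
Proof. by rewrite /plt eqxx. Qed.

Lemma is_idealP (A : {set T}) :
  reflect (forall x y, le x y -> y \in A -> x \in A) (is_ideal le A).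
Proof.
apply: (iffP forallP) => [idA x y lexy yA | idA x].
  by have /forallP/(_ y)/implyP := idA x; apply; rewrite lexy.
by apply/forallP => y; apply/implyP => /andP[]; apply: idA.
Qed.

Lemma is_ideal0 : is_ideal le set0.
Proof. by apply/is_idealP => x y _; rewrite in_set0. Qed.

Variables (V : zmodType) (f c : T -> V).

Definition toggle_sum (B : {set T}) : V :=
  \sum_p (f p *+ is_max_in B p - c p *+ is_min_out B p).

Section RemoveMaximal.
Variables (A : {set T}) (x : T).
Hypotheses (idA : is_ideal le A) (maxx : is_max_in A x).

Lemma max_in_notin_gt y : plt le x y -> y \notin A.
Proof. by case/andP: maxx => _ /forallP/(_ y)/implyP. Qed.

Lemma is_ideal_setD1 : is_ideal le (A :\ x).
Proof.
apply/is_idealP => a b leab; rewrite !in_setD1 => /andP[nebx bA].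
rewrite (is_idealP _ idA a b) // andbT; apply/eqP => eax.
have ltxb : plt le x b by rewrite /plt eq_sym nebx -eax.
by move: (max_in_notin_gt ltxb); rewrite bA.
Qed.

Lemma is_max_in_setD1 p : p != x ->
  is_max_in A p = is_max_in (A :\ x) p && ~~ plt le p x.
Proof.
move=> nepx; rewrite /is_max_in in_setD1 nepx /=.
case pA: (p \in A) => //=; apply/forallP/andP => [maxp | [/forallP maxp ltpx] y].
  split; last by apply/negP => /(implyP (maxp x)); case/andP: maxx => ->.
  apply/forallP => y; apply/implyP => /(implyP (maxp y)) /negbTE yA.
  by rewrite in_setD1 yA andbF.
apply/implyP => ltpy; have := implyP (maxp y) ltpy; rewrite in_setD1 negb_and negbK.
by case: eqP => // eyx; rewrite -eyx ltpy in ltpx.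
Qed.

Lemma is_min_out_setD1 p : p != x ->
  is_min_out (A :\ x) p = is_min_out A p && ~~ plt le x p.
Proof.
move=> nepx; rewrite /is_min_out in_setD1 nepx /=.
case: (p \in A) => //=; apply/forallP/andP => [minp | [/forallP minp ltxp] y].
  split; last by apply/negP => /(implyP (minp x)); rewrite in_setD1 eqxx.
  by apply/forallP => y; apply/implyP => /(implyP (minp y)); rewrite in_setD1 => /andP[].
apply/implyP => ltyp; rewrite in_setD1 (implyP (minp y) ltyp) andbT.
by apply: contraNneq ltxp => <-.
Qed.

Lemma is_max_in_max : is_max_in A x && ~~ is_max_in (A :\ x) x.
Proof. by rewrite maxx /is_max_in setD11. Qed.

Lemma is_min_out_max : ~~ is_min_out A x && is_min_out (A :\ x) x.
Proof.
rewrite /is_min_out setD11 (andP maxx).1 /=; apply/forallP => y; apply/implyP.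
case/andP => neyx leyx; rewrite in_setD1 neyx (is_idealP _ idA y x) //.
exact: (andP maxx).1.
Qed.

Lemma toggle_sum_setD1 :
  toggle_sum A + \sum_(p | plt le p x && is_max_in (A :\ x) p) f p
               + \sum_(p | plt le x p && is_min_out A p) c p
  = toggle_sum (A :\ x) + (f x + c x).
Proof.
rewrite /toggle_sum [\sum_(p | plt le p x && _) _]big_mkcond.
rewrite [\sum_(p | plt le x p && _) _]big_mkcond -!big_split /=.
rewrite (bigD1 x) //= [in RHS](bigD1 x) //= !pltxx /=.
case/andP: is_max_in_max => -> /negbTE ->; case/andP: is_min_out_max => /negbTE -> ->.
rewrite addr0 subr0 sub0r (eq_bigr (fun p =>
  f p *+ is_max_in (A :\ x) p - c p *+ is_min_out (A :\ x) p)).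
  by rewrite !mulr1n addr0 [f x + c x]addrC addrA (addrAC (- c x)) addNr add0r addrC.
move=> p nepx; rewrite is_max_in_setD1 // is_min_out_setD1 //.
case: (is_max_in _ p) (plt le p x) (is_min_out A p) (plt le x p) => [] [] [] [] /=.
all: by rewrite ?mulr0n ?mulr1n ?addr0 ?subr0 ?sub0r ?add0r ?subrK ?addNr // addrC ?addNKr.
Qed.

End RemoveMaximal.

Lemma toggle_sum_invariant (rank : T -> nat) :
  (forall x y, plt le x y -> (rank x < rank y)%N) ->
  (forall A x, is_ideal le A -> is_max_in A x ->
     f x + c x = \sum_(p | plt le p x && is_max_in (A :\ x) p) f p
               + \sum_(p | plt le x p && is_min_out A p) c p) ->
  forall A, is_ideal le A -> toggle_sum A = toggle_sum set0.
Proof.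
move=> rank_lt balance A; move: {2}#|A| (erefl #|A|) => k.
elim: k A => [|k IHk] A cardA idA.
  by move/eqP: cardA; rewrite cards_eq0 => /eqP ->.
have [y0 y0A] : exists y0, y0 \in A by apply/card_gt0P; rewrite cardA.
have [x xA rank_max] := arg_maxnP rank y0A.
have maxx : is_max_in A x.
  apply/andP; split=> //; apply/forallP => y; apply/implyP => ltxy.
  by apply/negP => /rank_max; have := rank_lt _ _ ltxy; lia.
have := toggle_sum_setD1 idA maxx; rewrite -addrA (balance A x idA maxx) => /addIr ->.
apply: IHk; last exact: is_ideal_setD1.
by move: cardA; rewrite (cardsD1 x A) (_ : x \in A) // => -[].
Qed.

End ToggleSum.

Lemma qequiv_Tminus_sum (T : finType) (le : rel T) (R : realType) (c : T -> Rq R) (k : Rq R) :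
  (forall I : ideals le, toggle_sum le (fun p => 1 + qvar R * c p) c (val I) = k) ->
  qequiv (fun I : ideals le => \sum_p Tminus R p I) (fun _ => k).
Proof.
move=> toggle_sumE; exists c => I; rewrite -(toggle_sumE I) /toggle_sum -sumrB.
apply: eq_bigr => p _; rewrite /Tq TminusE TplusE.
by case: (is_max_in _ _ p); case: (is_min_out _ _ p); rewrite /= ?mulr0n ?mulr1n; ring.
Qed.

Lemma sum_predU_disjoint (I : finType) (V : zmodType) (P Q : pred I) (F : I -> V) :
  (forall i, ~~ (P i && Q i)) ->
  \sum_(i | P i || Q i) F i = \sum_(i | P i) F i + \sum_(i | Q i) F i.
Proof.
move=> PQ0; rewrite (bigID P) /=; congr (_ + _); apply: eq_bigl => i.
all: by move: (PQ0 i); case: (P i); case: (Q i).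
Qed.

Section Staircase.
Variable n : nat.
Implicit Types (A : {set SSt n}) (p x y : SSt n).
Local Notation sle := (@SSt_le n).

Definition ci p : nat := (val p).1.
Definition cj p : nat := (val p).2.

Lemma SSt_inj p y : ci p = ci y -> cj p = cj y -> p = y.
Proof.
rewrite /ci /cj => e1 e2; apply: val_inj; move: e1 e2.
by case: (val p) (val y) => [i j] [i' j'] /= /val_inj -> /val_inj ->.
Qed.

Lemma ci_le_cj p : (ci p <= cj p)%N.
Proof. exact: valP p. Qed.

Lemma cj_lt p : (cj p < n)%N.
Proof. exact: ltn_ord. Qed.

Lemma SSt_cell a b : (a <= b)%N -> (b < n)%N -> exists p, ci p = a /\ cj p = b.
Proof.
move=> leab ltbn; have ltan := leq_ltn_trans leab ltbn.
by exists (exist _ (Ordinal ltan, Ordinal ltbn) leab).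
Qed.

Lemma SSt_ltE p y : plt sle p y =
  [&& (ci p != ci y) || (cj p != cj y), ci p <= ci y & cj p <= cj y]%N.
Proof.
rewrite /plt /SSt_le -/(ci p) -/(ci y) -/(cj p) -/(cj y); congr (_ && _).
apply/idP/idP => [| /orP[] ]; last 2 first.
- by apply: contraNneq => ->.
- by apply: contraNneq => ->.
by apply: contraR; rewrite negb_or !negbK => /andP[/eqP e1 /eqP e2]; rewrite (SSt_inj e1 e2).
Qed.

Definition has_cell A a b := [exists p in A, (ci p == a) && (cj p == b)].

Lemma has_cellP A a b :
  reflect (exists2 p, p \in A & ci p = a /\ cj p = b) (has_cell A a b).
Proof.
apply: (iffP exists_inP) => [[p pA /andP[/eqP <- /eqP <-]] | [p pA [<- <-]]].
  by exists p.
by exists p; rewrite ?eqxx.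
Qed.

Lemma mem_has_cell A p : (p \in A) = has_cell A (ci p) (cj p).
Proof.
apply/idP/has_cellP => [pA | [y yA [e1 e2]]]; first by exists p.
by rewrite -(SSt_inj e1 e2).
Qed.

Lemma has_cell_bound A a b : has_cell A a b -> (a <= b < n)%N.
Proof. by case/has_cellP => p _ [<- <-]; rewrite ci_le_cj cj_lt. Qed.

Lemma has_cell_down A a b a' b' : is_ideal sle A -> has_cell A a b ->
  (a' <= a)%N -> (b' <= b)%N -> (a' <= b')%N -> has_cell A a' b'.
Proof.
move=> idA abA le_a le_b le_ab'; have /andP[_ ltbn] := has_cell_bound abA.
have [y [ya yb]] := SSt_cell le_ab' (leq_ltn_trans le_b ltbn).
case/has_cellP: abA => p pA [pa pb]; rewrite -ya -yb -mem_has_cell.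
apply: (is_idealP _ _ idA y p) pA.
by rewrite /SSt_le -/(ci y) -/(cj y) -/(ci p) -/(cj p) ya yb pa pb le_a le_b.
Qed.

Lemma has_cell_setD1 A x a b :
  has_cell (A :\ x) a b = has_cell A a b && ~~ ((a == ci x) && (b == cj x)).
Proof.
apply/has_cellP/andP => [[p] | [/has_cellP[p pA [pa pb]] nex]].
  rewrite in_setD1 => /andP[nepx pA] [pa pb]; split; first by apply/has_cellP; exists p.
  by apply: contra nepx => /andP[/eqP xa /eqP xb]; apply/eqP/SSt_inj; [rewrite pa | rewrite pb].
exists p => //; rewrite in_setD1 pA andbT.
by apply: contra nex => /eqP epx; rewrite -pa -pb epx !eqxx.
Qed.

Lemma has_cell0 a b : has_cell set0 a b = false.
Proof. by apply/has_cellP => -[p]; rewrite in_set0. Qed.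

Lemma is_max_inE A p : is_ideal sle A ->
  is_max_in sle A p =
  [&& p \in A, ~~ has_cell A (ci p) (cj p).+1 & ~~ has_cell A (ci p).+1 (cj p)].
Proof.
move=> idA; rewrite /is_max_in; case pA: (p \in A) => //=.
have lep := ci_le_cj p; apply/forallP/andP => [maxp | [nR nD] y].
  suff no_above a b : (ci p <= a)%N -> (cj p <= b)%N -> (ci p + cj p < a + b)%N ->
      ~~ has_cell A a b.
    by split; apply: no_above => //; rewrite addnS ?addSn.
  move=> le_a le_b lt_ab; apply/has_cellP => -[z zA [za zb]].
  have ltpz : plt sle p z by rewrite SSt_ltE za zb le_a le_b; lia.
  by move: (implyP (maxp z) ltpz); rewrite zA.
apply/implyP; rewrite SSt_ltE => ltpy; rewrite mem_has_cell; apply/negP => yA.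
have := ci_le_cj y; case: (ltnP (cj p) (cj y)) => lt_j le_y.
  by move/negP: nR; apply; apply: (has_cell_down idA yA); lia.
by move/negP: nD; apply; apply: (has_cell_down idA yA); lia.
Qed.

Lemma is_min_outE A p : is_ideal sle A ->
  is_min_out sle A p =
  [&& p \notin A, (ci p == 0)%N || has_cell A (ci p).-1 (cj p)
                & (ci p == cj p) || has_cell A (ci p) (cj p).-1].
Proof.
move=> idA; rewrite /is_min_out; case pA: (p \in A) => //=.
have lep := ci_le_cj p; have ltpn := cj_lt p.
apply/forallP/andP => [minp | [hU hL] y].
  suff below a b : (a <= ci p)%N -> (b <= cj p)%N -> (a + b < ci p + cj p)%N ->
      (a <= b)%N -> has_cell A a b.
    split; [case: posnP => // ip | case: eqVneq => // nepp]; apply: below; lia.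
  move=> le_a le_b lt_ab leab; have [z [za zb]] := SSt_cell leab (leq_ltn_trans le_b ltpn).
  rewrite -za -zb -mem_has_cell; apply: (implyP (minp z)).
  by rewrite SSt_ltE za zb le_a le_b; lia.
apply/implyP; rewrite SSt_ltE mem_has_cell => ltyp; have := ci_le_cj y.
case: (ltnP (ci y) (ci p)) => lt_i le_y.
  by case: eqP hU => [|_ hU]; last apply: (has_cell_down idA hU); lia.
by case: eqP hL => [|_ hL]; last apply: (has_cell_down idA hL); lia.
Qed.

Lemma sum_cell (V : zmodType) (F : nat -> nat -> V) (C : bool) a b :
  (C -> a <= b < n)%N ->
  \sum_(p | [&& C, ci p == a & cj p == b]) F (ci p) (cj p) = if C then F a b else 0.
Proof.
case: C => [/(_ isT) /andP[leab ltbn] | _]; last by rewrite big_pred0.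
have [p0 [p0a p0b]] := SSt_cell leab ltbn.
rewrite (big_pred1 p0) ?p0a ?p0b // => p /=.
apply/andP/eqP => [[/eqP pa /eqP pb] | ->]; last by rewrite p0a p0b.
by apply: SSt_inj; rewrite ?pa ?pb.
Qed.

Lemma toggle_sum_SSt_set0 (V : zmodType) (F G : nat -> nat -> V) : (0 < n)%N ->
  toggle_sum sle (fun p => F (ci p) (cj p)) (fun p => G (ci p) (cj p)) set0
  = - G 0%N 0%N.
Proof.
move=> n_gt0; rewrite /toggle_sum.
rewrite (eq_bigr (fun p =>
  - (if [&& true, ci p == 0%N & cj p == 0%N] then G (ci p) (cj p) else 0))).
  by rewrite sumrN -big_mkcond sum_cell.
move=> p _; rewrite {1}/is_max_in in_set0 mulr0n sub0r mulrb.
rewrite is_min_outE ?is_ideal0 // !has_cell0 in_set0 !orbF /=.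
by case: eqP => //= ->; rewrite eq_sym.
Qed.

Section MaximalCell.
Variables (A : {set SSt n}) (x : SSt n).
Hypotheses (idA : is_ideal sle A) (maxx : is_max_in sle A x).
Local Notation a := (ci x).
Local Notation b := (cj x).

Lemma has_cell_max : has_cell A a b.
Proof. by rewrite -mem_has_cell; case/andP: maxx. Qed.

Lemma has_cell_above_max a' b' :
  has_cell A a' b' -> (a <= a')%N -> (b <= b')%N -> a' = a /\ b' = b.
Proof.
case/has_cellP => z zA [za zb]; subst a' b' => le_a le_b.
case: (eqVneq z x) => [-> // | nezx].
have ltxz : plt sle x z by rewrite /plt eq_sym nezx /SSt_le le_a le_b.
by move: (max_in_notin_gt maxx ltxz); rewrite zA.
Qed.

Lemma lower_coversE p :
  plt sle p x && is_max_in sle (A :\ x) p =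
     [&& (0 < a) && ~~ has_cell A a.-1 b.+1, ci p == a.-1 & cj p == b]%N
  || [&& (a < b) && ~~ has_cell A a.+1 b.-1, ci p == a & cj p == b.-1]%N.
Proof.
have xA := has_cell_max; have lex := ci_le_cj x; have ltx := cj_lt x.
have lep := ci_le_cj p.
rewrite is_max_inE ?is_ideal_setD1 // mem_has_cell !has_cell_setD1 SSt_ltE.
apply/idP/idP => [/and4P[/and3P[nepx le_i le_j] _ nR nD] | ].
  case: (ltnP (cj p) b) => [lt_j | ge_j].
    have hR : has_cell A (ci p) (cj p).+1 by apply: (has_cell_down idA xA); lia.
    move: nR nD; rewrite hR /= negbK => /andP[/eqP pi /eqP pj].
    rewrite pi (_ : cj p = b.-1) ?(gtn_eqF (ltnSn a)) /=; last by lia.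
    rewrite andbT => nh; apply/orP; right; rewrite nh !eqxx !andbT; lia.
  have hD : has_cell A (ci p).+1 (cj p) by apply: (has_cell_down idA xA); lia.
  move: nD nR; rewrite hD /= negbK => /andP[/eqP pi /eqP pj].
  rewrite -pi pj (gtn_eqF (ltnSn b)) andbF andbT => nh; apply/orP; left.
  by rewrite nh !eqxx.
case/orP => /and3P[/andP[a_pos nh] /eqP pi /eqP pj]; rewrite pi pj.
  by rewrite (negbTE nh) (prednK a_pos) (has_cell_down idA xA) ?xA /=; lia.
by rewrite (negbTE nh) (ltn_predK a_pos) (has_cell_down idA xA) ?xA /=; lia.
Qed.

Lemma upper_coversE p :
  plt sle x p && is_min_out sle A p =
     [&& (b.+1 < n) && ((a == 0) || has_cell A a.-1 b.+1), ci p == a & cj p == b.+1]%N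
  || [&& (a < b) && ((a.+1 == b) || has_cell A a.+1 b.-1), ci p == a.+1 & cj p == b]%N.
Proof.
have xA := has_cell_max; have lex := ci_le_cj x; have ltx := cj_lt x.
have lep := ci_le_cj p; have ltp := cj_lt p.
rewrite is_min_outE // mem_has_cell SSt_ltE.
apply/idP/idP => [/and4P[/and3P[nexp le_i le_j] npA hU hL] | ].
  case: (ltnP b (cj p)) => [lt_j | ge_j].
    case: eqP hL => [eq_ij _ | ne_ij /has_cell_above_max hL].
      by move: hU; case: eqP => [| _ /has_cell_above_max]; lia.
    have [pi pj] : ci p = a /\ cj p = b.+1 by lia.
    by move: hU; rewrite pi pj => hU; apply/orP; left; rewrite hU !eqxx andbT; lia.
  have [pi pj] : ci p = a.+1 /\ cj p = b.
    by move: hU; case: eqP => [| _ /has_cell_above_max]; lia.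
  by move: hL; rewrite pi pj => hL; apply/orP; right; rewrite hL !eqxx andbT; lia.
case/orP => /and3P[/andP[lt_n h] /eqP pi /eqP pj]; rewrite pi pj h xA ?orbT.
  have : ~~ has_cell A a b.+1 by apply/negP => /has_cell_above_max; lia.
  by move=> ->; lia.
have : ~~ has_cell A a.+1 b by apply/negP => /has_cell_above_max; lia.
by move=> ->; lia.
Qed.

Lemma sum_lower_covers (V : zmodType) (F : nat -> nat -> V) :
  \sum_(p | plt sle p x && is_max_in sle (A :\ x) p) F (ci p) (cj p) =
    (if (0 < a)%N && ~~ has_cell A a.-1 b.+1 then F a.-1 b else 0)
  + (if (a < b)%N && ~~ has_cell A a.+1 b.-1 then F a b.-1 else 0).
Proof.
have lex := ci_le_cj x; have ltx := cj_lt x.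
rewrite (eq_bigl _ _ lower_coversE) sum_predU_disjoint; last first.
  by move=> p; apply/negP => /andP[/and3P[_ /eqP -> /eqP ->] /and3P[/andP[+ _] _ /eqP]]; lia.
by rewrite !sum_cell // => /andP[]; lia.
Qed.

Lemma sum_upper_covers (V : zmodType) (F : nat -> nat -> V) :
  \sum_(p | plt sle x p && is_min_out sle A p) F (ci p) (cj p) =
    (if (b.+1 < n)%N && ((a == 0)%N || has_cell A a.-1 b.+1) then F a b.+1 else 0)
  + (if (a < b)%N && ((a.+1 == b) || has_cell A a.+1 b.-1) then F a.+1 b else 0).
Proof.
have lex := ci_le_cj x; have ltx := cj_lt x.
rewrite (eq_bigl _ _ upper_coversE) sum_predU_disjoint; last first.
  by move=> p; apply/negP => /andP[/and3P[_ /eqP -> _] /and3P[_ /eqP]]; lia.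
by rewrite !sum_cell // => /andP[]; lia.
Qed.

Lemma SSt_balance (F : fieldType) (q : F) :
  1 - q != 0 -> 1 + q != 0 -> 1 + q ^+ n != 0 ->
  fcoef q n a b + ccoef q n a b =
    \sum_(p | plt sle p x && is_max_in sle (A :\ x) p) fcoef q n (ci p) (cj p)
  + \sum_(p | plt sle x p && is_min_out sle A p) ccoef q n (ci p) (cj p).
Proof.
move=> q_neq1 q_neqN1 qn_neqN1; have lex := ci_le_cj x; have ltx := cj_lt x.
rewrite sum_lower_covers sum_upper_covers addrACA.
rewrite coef_pair_up_right ?coef_pair_left_down ?coef_balance //.
  by move/has_cell_bound; lia.
by move/has_cell_bound; lia.
Qed.

End MaximalCell.

End Staircase.

Theorem theorem5p15 (R : realType) (n : nat) (hn : (1 <= n)%N) :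
  qequiv (fun I : ideals (@SSt_le n) => \sum_(p : SSt n) Tminus R p I)
         (fun _ => qbinom R n.+1 2 / qint R (2 * n)).
Proof.
have q_neq1 := onem_qvar_neq0 R.
have q_neqN1 : 1 + qvar R != 0 by rewrite -[qvar R]expr1 addX_qvar_neq0.
have qn_neqN1 := addX_qvar_neq0 R hn.
rewrite qbinom2_div_qint //.
apply: (qequiv_Tminus_sum (c := fun p => ccoef (qvar R) n (ci p) (cj p))) => I.
rewrite (toggle_sum_invariant (rank := fun p => ci p + cj p)) ?(valP I) //.
- exact: (toggle_sum_SSt_set0 (fcoef (qvar R) n)).
- by move=> p y; rewrite SSt_ltE; lia.
- move=> A x idA maxx; exact: (SSt_balance idA maxx q_neq1 q_neqN1 qn_neqN1).
Qed.
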